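(* Let $\Omega_n=\dfrac{\pi^{n/2}}{\Gamma\left(\frac n2+1\right)}$ for $n\in\mathbb{N}_0$, and \[ p(n)=\frac1{2n}-\frac1{2n^2}+\frac5{12n^3}-\frac1{4n^4}+\frac1{10n^5}-\frac1{6n^6},\qquad q(n)=p(n)+\frac1{6n^6}. \] Then for every $n\in\mathbb{N}$, \[ p(n)<\ln\frac{\Omega_n^2}{\Omega_{n-1}\Omega_{n+1}}<q(n). \]
   Context: $\Omega_n$ is the volume of the unit ball in $\mathbb{R}^n$ ($\Omega_0=1$); $\Gamma$ is Euler's gamma function. *)

From Stdlib Require Import Reals.
From Coquelicot Require Import Coquelicot.
Open Scope R_scope.

Definition Gamma (x : R) : R :=
  RInt_gen (fun t => Rpower t (x - 1) * exp (- t)) (at_right 0) (Rbar_locally p_infty).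

Definition Omega (n : nat) : R :=
  Rpower PI (INR n / 2) / Gamma (INR n / 2 + 1).

Definition p_fun (n : R) : R :=
  1 / (2 * n) - 1 / (2 * n ^ 2) + 5 / (12 * n ^ 3) - 1 / (4 * n ^ 4)
  + 1 / (10 * n ^ 5) - 1 / (6 * n ^ 6).

Definition q_fun (n : R) : R := p_fun n + 1 / (6 * n ^ 6).

From Stdlib Require Import Reals Lra Lia Classical.
From Coquelicot Require Import Coquelicot.
Open Scope R_scope.

(* Write rho(x) = Gamma((x+1)/2) Gamma((x+3)/2) / Gamma((x+2)/2)^2, so that the ratio
   of the theorem is rho(n).  The functional equation of Gamma gives
   rho(x+2) = rho(x) (1 - 1/(x+2)^2) and rho(x) rho(x+1) = (x+2)/(x+1), and the
   log-convexity of Gamma (Cauchy-Schwarz on Euler's integral) gives rho >= 1; hence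
   0 <= ln rho(x) <= 1/x.  For d = ln rho - p, the Taylor bound
   -ln(1-u) >= u + u^2/2 + u^3/3 + u^4/4 at u = 1/(x+2)^2 shows d(x+2) < d(x); since
   d(x) >= -1/x, the values d(x), d(x+2), d(x+4), ... decrease to a limit >= 0, so
   d(x) > 0.  The upper bound follows in the same way from
   -ln(1-u) <= u + u^2/2 + u^3/(3(1-u)) applied to q - ln rho. *)

Lemma ball_R_iff (x e y : R) : ball x e y <-> x - e < y < x + e.
Proof.
  change (ball x e y) with (Rabs (y - x) < e).
  split; [intros H; apply Rabs_def2 in H | intros H; apply Rabs_def1]; lra.
Qed.

Lemma at_right_0_lt a0 : 0 < a0 -> at_right 0 (fun a => 0 < a < a0).
Proof.
  intros ha0. exists (mkposreal _ ha0). intros y Hy hy.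
  apply ball_R_iff in Hy. simpl in Hy. lra.
Qed.

Lemma eventually_pos_segment (P : R -> Prop) : (forall x, 0 < x -> P x) ->
  filter_prod (at_right 0) (Rbar_locally p_infty)
    (fun ab => forall x, Rmin (fst ab) (snd ab) <= x <= Rmax (fst ab) (snd ab) -> P x).
Proof.
  intros HP. apply (Filter_prod _ _ _ (fun a => 0 < a) (fun b => 0 < b)).
  - exists (mkposreal 1 Rlt_0_1). intros; auto.
  - exists 0. auto.
  - intros a b ha hb x [hx _]; simpl in hx. apply HP. pose proof (Rmin_glb_lt a b 0 ha hb). lra.
Qed.

Lemma is_RInt_gen_ge0 f l : (forall x, 0 < x -> 0 <= f x) ->
  is_RInt_gen f (at_right 0) (Rbar_locally p_infty) l -> 0 <= l.
Proof.
  intros Hf Hl. apply Rnot_lt_le. intros hl.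
  assert (hneg : locally l (fun y => y < 0)).
  { exists (mkposreal _ (Ropp_0_gt_lt_contravar _ hl)). intros y Hy.
    apply ball_R_iff in Hy. simpl in Hy. lra. }
  destruct (Hl _ hneg) as [Q P HQ HP HQP].
  destruct HQ as [d Hd]. destruct HP as [M HM].
  set (a := d / 2). assert (ha : 0 < a < d) by (unfold a; destruct d; simpl; lra).
  assert (Qa : Q a).
  { apply Hd; [|lra]. apply ball_R_iff. lra. }
  set (b := Rmax a M + 1).
  assert (hab : a <= b) by (unfold b; pose proof (Rmax_l a M); lra).
  assert (Pb : P b) by (apply HM; unfold b; pose proof (Rmax_r a M); lra).
  destruct (HQP a b Qa Pb) as [y [Hy Hy0]]. simpl in Hy.
  assert (Hab : 0 <= RInt f a b).
  { apply RInt_ge_0; [lra | exists y; exact Hy | intros x hx; apply Hf; lra]. }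
  rewrite (is_RInt_unique f a b y Hy) in Hab. lra.
Qed.

Lemma is_RInt_gen_of_bounded f B :
  (forall a b, 0 < a -> a <= b -> ex_RInt f a b) ->
  (forall x, 0 < x -> 0 <= f x) ->
  (forall a b, 0 < a -> a <= b -> RInt f a b <= B) ->
  exists L, is_RInt_gen f (at_right 0) (Rbar_locally p_infty) L /\
    forall a b, 0 < a -> a <= b -> RInt f a b <= L.
Proof.
  intros Hex Hf HB.
  set (E := fun y => exists a b, 0 < a /\ a <= b /\ y = RInt f a b).
  destruct (completeness E) as [L [Hub Hlub]].
  { exists B. intros y [a [b [ha [hab ->]]]]. apply HB; auto. }
  { exists (RInt f 1 1), 1, 1. repeat split; lra. }
  assert (Hup : forall a b, 0 < a -> a <= b -> RInt f a b <= L).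
  { intros a b ha hab. apply Hub. exists a, b; auto. }
  exists L. split; [|exact Hup].
  intros P [eps HP].
  assert (Hclose : exists a0 b0, 0 < a0 /\ a0 <= b0 /\ L - eps < RInt f a0 b0).
  { apply NNPP. intros Hn.
    assert (L <= L - eps); [|destruct eps; simpl in *; lra].
    apply Hlub. intros y [a [b [ha [hab ->]]]].
    apply Rnot_lt_le. intros h. apply Hn. exists a, b; auto. }
  destruct Hclose as [a0 [b0 [ha0 [hab0 Hlt]]]].
  apply (Filter_prod _ _ _ (fun a => 0 < a < a0) (fun b => b0 < b)).
  - apply at_right_0_lt, ha0.
  - exists b0. auto.
  - intros a b [ha hab] hb. simpl. exists (RInt f a b). split.
    + apply (@RInt_correct R_CompleteNormedModule), Hex; lra.
    + apply HP, ball_R_iff.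
      assert (Hsplit : RInt f a b = RInt f a a0 + RInt f a0 b0 + RInt f b0 b).
      { rewrite <- (RInt_Chasles f a a0 b), <- (RInt_Chasles f a0 b0 b) by (apply Hex; lra).
        unfold plus; simpl; ring. }
      assert (0 <= RInt f a a0).
      { apply RInt_ge_0; [lra | apply Hex; lra | intros; apply Hf; lra]. }
      assert (0 <= RInt f b0 b).
      { apply RInt_ge_0; [lra | apply Hex; lra | intros; apply Hf; lra]. }
      pose proof (Hup a b ha ltac:(lra)).
      lra.
Qed.

Definition gamma_integrand (s t : R) : R := Rpower t (s - 1) * exp (- t).

Lemma gamma_integrand_pos s t : 0 < gamma_integrand s t.
Proof. apply Rmult_lt_0_compat; apply exp_pos. Qed.

Lemma ex_RInt_gamma_integrand s a b : 0 < a -> a <= b -> ex_RInt (gamma_integrand s) a b.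
Proof.
  intros ha hab. apply (@ex_RInt_continuous R_CompleteNormedModule). intros t ht.
  rewrite Rmin_left in ht by lra.
  apply (ex_derive_continuous (gamma_integrand s)).
  unfold gamma_integrand, Rpower. auto_derive. lra.
Qed.

Lemma gamma_integrand_succ s t : 0 < t -> gamma_integrand (s + 1) t = t * gamma_integrand s t.
Proof.
  intros ht. unfold gamma_integrand, Rpower.
  replace (s + 1 - 1) with ((s - 1) + 1) by ring.
  rewrite Rmult_plus_distr_r, Rmult_1_l, exp_plus, exp_ln by exact ht. ring.
Qed.

Lemma is_derive_gamma_integrand_succ s t : 0 < t ->
  is_derive (gamma_integrand (s + 1)) t (s * gamma_integrand s t - gamma_integrand (s + 1) t).
Proof.
  intros ht. rewrite (gamma_integrand_succ s t ht).
  unfold gamma_integrand, Rpower. auto_derive; [lra|].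
  replace (s + 1 - 1) with ((s - 1) + 1) by ring.
  rewrite (Rmult_plus_distr_r (s - 1) 1 (ln t)), (Rmult_1_l (ln t)), exp_plus, exp_ln by exact ht.
  field. lra.
Qed.

Lemma exp_le_compat x y : x <= y -> exp x <= exp y.
Proof. intros [h | ->]; [left; apply exp_increasing, h | right; reflexivity]. Qed.

Lemma ln_le_2sqrt t : 0 < t -> ln t <= 2 * sqrt t.
Proof.
  intros ht. assert (hs : 0 < sqrt t) by (apply sqrt_lt_R0; lra).
  rewrite <- (sqrt_sqrt t) at 1 by lra. rewrite ln_mult by lra.
  pose proof (exp_ineq1_le (ln (sqrt t))) as Hexp. rewrite exp_ln in Hexp by lra. lra.
Qed.

(* [(s - 1) ln t <= 2 (s - 1) sqrt t <= 2 (s - 1)^2 + t / 2]. *)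
Lemma gamma_integrand_le s t : 1 <= s -> 0 < t ->
  gamma_integrand s t <= exp (2 * (s - 1) ^ 2) * exp (- t / 2).
Proof.
  intros hs ht. unfold gamma_integrand, Rpower. rewrite <- !exp_plus.
  apply exp_le_compat.
  assert (Hsq : sqrt t * sqrt t = t) by (apply sqrt_sqrt; lra).
  assert ((s - 1) * ln t <= (s - 1) * (2 * sqrt t)).
  { apply Rmult_le_compat_l; [lra | apply ln_le_2sqrt, ht]. }
  pose proof (pow2_ge_0 (sqrt t - 2 * (s - 1))). nra.
Qed.

Lemma gamma_integrand_lim_0 s : 2 <= s ->
  filterlim (gamma_integrand s) (at_right 0) (locally 0).
Proof.
  intros hs. apply filterlim_locally. intros eps.
  assert (hd : 0 < Rmin eps 1) by (apply Rmin_glb_lt; [apply cond_pos | lra]).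
  apply (filter_imp (fun t => 0 < t < Rmin eps 1)); [|apply at_right_0_lt, hd].
  intros t ht. apply ball_R_iff.
  pose proof (Rmin_l eps 1). pose proof (Rmin_r eps 1).
  assert (ln t <= 0) by (rewrite <- ln_1; apply ln_le; lra).
  assert (Rpower t (s - 1) <= t).
  { unfold Rpower. rewrite <- (exp_ln t) at 2 by lra. apply exp_le_compat. nra. }
  assert (exp (- t) <= 1) by (rewrite <- exp_0; apply exp_le_compat; lra).
  pose proof (exp_pos (- t)). pose proof (gamma_integrand_pos s t).
  unfold gamma_integrand in *. nra.
Qed.

Lemma gamma_integrand_lim_infty s : 1 <= s ->
  filterlim (gamma_integrand s) (Rbar_locally p_infty) (locally 0).
Proof.
  intros hs. apply filterlim_locally. intros eps.
  exists (Rmax 1 (2 * (2 * (s - 1) ^ 2 - ln eps))). intros t ht.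
  pose proof (Rmax_l 1 (2 * (2 * (s - 1) ^ 2 - ln eps))).
  pose proof (Rmax_r 1 (2 * (2 * (s - 1) ^ 2 - ln eps))).
  apply ball_R_iff.
  assert (gamma_integrand s t < eps).
  { eapply Rle_lt_trans; [apply gamma_integrand_le; lra|].
    rewrite <- exp_plus, <- (exp_ln eps) by apply cond_pos.
    apply exp_increasing. lra. }
  pose proof (gamma_integrand_pos s t). lra.
Qed.

Lemma RInt_exp_half C a b : a <= b ->
  RInt (fun t => C * exp (- t / 2)) a b = 2 * C * (exp (- a / 2) - exp (- b / 2)).
Proof.
  intros hab.
  rewrite (is_RInt_unique _ a b (minus (-2 * C * exp (- b / 2)) (-2 * C * exp (- a / 2)))).
  - unfold minus, plus, opp; simpl. ring.
  - apply (@is_RInt_derive R_CompleteNormedModule (fun t => -2 * C * exp (- t / 2))).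
    + intros t _. auto_derive; [auto | unfold Rdiv; field].
    + intros t _. apply (ex_derive_continuous (fun t => C * exp (- t / 2))). auto_derive. auto.
Qed.

(* The partial integrals are bounded by those of [exp (2 (s-1)^2) exp (-t/2)]. *)
Lemma is_RInt_gen_Gamma_sup s : 1 <= s ->
  is_RInt_gen (gamma_integrand s) (at_right 0) (Rbar_locally p_infty) (Gamma s) /\
  forall a b, 0 < a -> a <= b -> RInt (gamma_integrand s) a b <= Gamma s.
Proof.
  intros hs. set (C := exp (2 * (s - 1) ^ 2)).
  destruct (is_RInt_gen_of_bounded (gamma_integrand s) (2 * C)) as [L [HL Hle]].
  - intros; apply ex_RInt_gamma_integrand; auto.
  - intros; left; apply gamma_integrand_pos.
  - intros a b ha hab.
    apply Rle_trans with (RInt (fun t => C * exp (- t / 2)) a b).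
    + apply RInt_le; [exact hab | apply ex_RInt_gamma_integrand; auto | |].
      * apply (@ex_RInt_continuous R_CompleteNormedModule). intros t _.
        apply (ex_derive_continuous (fun t => C * exp (- t / 2))). auto_derive. auto.
      * intros t ht. apply gamma_integrand_le; lra.
    + rewrite RInt_exp_half by exact hab.
      assert (exp (- a / 2) <= 1) by (rewrite <- exp_0; apply exp_le_compat; lra).
      pose proof (exp_pos (- b / 2)). pose proof (exp_pos (2 * (s - 1) ^ 2)). unfold C. nra.
  - replace (Gamma s) with L by (symmetry; apply is_RInt_gen_unique, HL).
    split; assumption.
Qed.

Lemma is_RInt_gen_Gamma s : 1 <= s ->
  is_RInt_gen (gamma_integrand s) (at_right 0) (Rbar_locally p_infty) (Gamma s).
Proof. intros hs. apply is_RInt_gen_Gamma_sup, hs. Qed.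

Lemma Gamma_pos s : 1 <= s -> 0 < Gamma s.
Proof.
  intros hs. destruct (is_RInt_gen_Gamma_sup s hs) as [_ Hle].
  apply Rlt_le_trans with (RInt (gamma_integrand s) 1 2); [|apply Hle; lra].
  apply Rlt_le_trans with (RInt (fun _ => exp (-2)) 1 2).
  - rewrite (@RInt_const R_CompleteNormedModule). unfold scal; simpl; unfold mult; simpl.
    apply Rmult_lt_0_compat; [lra | apply exp_pos].
  - apply RInt_le; [lra | apply ex_RInt_const | apply ex_RInt_gamma_integrand; lra |].
    intros t ht. unfold gamma_integrand, Rpower.
    assert (0 <= ln t) by (rewrite <- ln_1; apply ln_le; lra).
    assert (1 <= exp ((s - 1) * ln t)).
    { rewrite <- exp_0 at 1. apply exp_le_compat, Rmult_le_pos; lra. }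
    assert (exp (-2) <= exp (- t)) by (apply exp_le_compat; lra).
    pose proof (exp_pos (-2)). nra.
Qed.

(* Integration by parts: [t^s e^(-t)] vanishes at both ends of [(0, +oo)]. *)
Lemma Gamma_succ s : 1 <= s -> Gamma (s + 1) = s * Gamma s.
Proof.
  intros hs.
  set (g := fun t => s * gamma_integrand s t - gamma_integrand (s + 1) t).
  assert (Hder : forall t, 0 < t -> is_derive (gamma_integrand (s + 1)) t (g t))
    by (intros; apply is_derive_gamma_integrand_succ; auto).
  assert (Hg0 : is_RInt_gen g (at_right 0) (Rbar_locally p_infty) (0 - 0)).
  { apply (is_RInt_gen_ext (Derive (gamma_integrand (s + 1)))).
    - eapply filter_imp; [|apply eventually_pos_segment; intros t ht; apply is_derive_unique, Hder, ht].
      intros ab H t ht. apply H. lra.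
    - apply is_RInt_gen_Derive.
      + apply eventually_pos_segment. intros t ht. exists (g t). apply Hder, ht.
      + apply eventually_pos_segment. intros t ht.
        apply (continuous_ext_loc _ g).
        * apply (locally_open (fun y => 0 < y)); [apply open_gt | |exact ht].
          intros y hy. symmetry. apply is_derive_unique, Hder, hy.
        * apply (ex_derive_continuous g). unfold g, gamma_integrand, Rpower. auto_derive. lra.
      + apply gamma_integrand_lim_0. lra.
      + apply gamma_integrand_lim_infty. lra. }
  assert (Hg : is_RInt_gen g (at_right 0) (Rbar_locally p_infty)
                 (minus (scal s (Gamma s)) (Gamma (s + 1)))).
  { apply (is_RInt_gen_minus (fun t => scal s (gamma_integrand s t)) (gamma_integrand (s + 1))).
    - apply (is_RInt_gen_scal (gamma_integrand s)), is_RInt_gen_Gamma, hs.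
    - apply is_RInt_gen_Gamma. lra. }
  assert (E0 : RInt_gen g (at_right 0) (Rbar_locally p_infty) = 0 - 0)
    by (apply is_RInt_gen_unique, Hg0).
  assert (E : RInt_gen g (at_right 0) (Rbar_locally p_infty) = s * Gamma s - Gamma (s + 1))
    by (apply is_RInt_gen_unique, Hg).
  lra.
Qed.

(* Cauchy-Schwarz: [Gamma a + 2 lam Gamma m + lam^2 Gamma b >= 0] for every [lam],
   because the integrands satisfy [f_m^2 = f_a f_b]. *)
Lemma Gamma_midpoint_sq_le a b : 1 <= a -> 1 <= b ->
  Gamma ((a + b) / 2) ^ 2 <= Gamma a * Gamma b.
Proof.
  intros ha hb. set (m := (a + b) / 2).
  assert (Hmid : forall t, 0 < t ->
    gamma_integrand m t ^ 2 = gamma_integrand a t * gamma_integrand b t).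
  { intros t ht. unfold gamma_integrand, Rpower, m.
    rewrite <- !exp_plus. simpl. rewrite Rmult_1_r, <- exp_plus. f_equal. field. }
  assert (Hquad : forall lam, 0 <= Gamma a + 2 * lam * Gamma m + lam ^ 2 * Gamma b).
  { intros lam. apply (is_RInt_gen_ge0 (fun t =>
      plus (plus (gamma_integrand a t) (scal (2 * lam) (gamma_integrand m t)))
           (scal (lam ^ 2) (gamma_integrand b t)))).
    - intros t ht. change (0 <= gamma_integrand a t + 2 * lam * gamma_integrand m t
                               + lam ^ 2 * gamma_integrand b t).
      set (X := gamma_integrand a t). set (Y := gamma_integrand b t).
      set (Z := gamma_integrand m t).
      assert (HX : 0 < X) by apply gamma_integrand_pos.
      assert (E : X * (X + 2 * lam * Z + lam ^ 2 * Y) = (X + lam * Z) ^ 2).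
      { replace ((X + lam * Z) ^ 2) with (X * X + 2 * lam * X * Z + lam ^ 2 * Z ^ 2) by ring.
        unfold Z. rewrite Hmid by exact ht. fold X Y. ring. }
      apply (Rmult_le_reg_l X); [exact HX|].
      rewrite Rmult_0_r, E. apply pow2_ge_0.
    - apply (is_RInt_gen_plus
        (fun t => plus (gamma_integrand a t) (scal (2 * lam) (gamma_integrand m t)))
        (fun t => scal (lam ^ 2) (gamma_integrand b t))).
      + apply (is_RInt_gen_plus (gamma_integrand a) (fun t => scal (2 * lam) (gamma_integrand m t))).
        * apply is_RInt_gen_Gamma, ha.
        * apply (is_RInt_gen_scal (gamma_integrand m)), is_RInt_gen_Gamma. unfold m; lra.
      + apply (is_RInt_gen_scal (gamma_integrand b)), is_RInt_gen_Gamma, hb. }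
  pose proof (Gamma_pos b hb) as HGb.
  specialize (Hquad (- Gamma m / Gamma b)).
  replace (Gamma a * Gamma b) with
    ((Gamma a + 2 * (- Gamma m / Gamma b) * Gamma m + (- Gamma m / Gamma b) ^ 2 * Gamma b)
     * Gamma b + Gamma m ^ 2) by (field; lra).
  pose proof (Rmult_le_pos _ _ Hquad (Rlt_le _ _ HGb)). lra.
Qed.

Lemma le_of_derive_nonneg (f df : R -> R) a b : a <= b ->
  (forall x, a <= x <= b -> is_derive f x (df x)) ->
  (forall x, a <= x <= b -> 0 <= df x) -> f a <= f b.
Proof.
  intros hab Hd Hpos.
  destruct (MVT_gen f a b df) as [c [hc Hc]];
    rewrite ?Rmin_left, ?Rmax_right in * by exact hab.
  - intros x hx. apply Hd. lra.
  - intros x hx. apply continuity_pt_filterlim, (ex_derive_continuous f).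
    exists (df x). apply Hd, hx.
  - pose proof (Hpos c hc). nra.
Qed.

Definition taylor_neg_ln_1m (u : R) : R := u + u ^ 2 / 2 + u ^ 3 / 3 + u ^ 4 / 4.

Definition tail_bound_neg_ln_1m (u : R) : R := u + u ^ 2 / 2 + u ^ 3 / (3 * (1 - u)).

Lemma taylor_le_neg_ln_1m u : 0 <= u < 1 -> taylor_neg_ln_1m u <= - ln (1 - u).
Proof.
  intros hu. enough (0 <= - ln (1 - u) - taylor_neg_ln_1m u) by lra.
  replace 0 with (- ln (1 - 0) - taylor_neg_ln_1m 0) at 1
    by (unfold taylor_neg_ln_1m; rewrite Rminus_0_r, ln_1; field).
  apply (le_of_derive_nonneg (fun v => - ln (1 - v) - taylor_neg_ln_1m v)
           (fun v => v ^ 4 / (1 - v))); [lra | |].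
  - intros x hx. unfold taylor_neg_ln_1m. auto_derive; [lra | field; lra].
  - intros x hx. apply Rdiv_le_0_compat; [apply pow_le | ]; lra.
Qed.

Lemma neg_ln_1m_le_tail_bound u : 0 <= u < 1 -> - ln (1 - u) <= tail_bound_neg_ln_1m u.
Proof.
  intros hu. enough (0 <= tail_bound_neg_ln_1m u + ln (1 - u)) by lra.
  replace 0 with (tail_bound_neg_ln_1m 0 + ln (1 - 0)) at 1
    by (unfold tail_bound_neg_ln_1m; rewrite Rminus_0_r, ln_1; field).
  apply (le_of_derive_nonneg (fun v => tail_bound_neg_ln_1m v + ln (1 - v))
           (fun v => v ^ 3 / (3 * (1 - v) ^ 2))); [lra | |].
  - intros x hx. unfold tail_bound_neg_ln_1m. auto_derive; [lra | field; lra].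
  - intros x hx. apply Rdiv_le_0_compat; [apply pow_le; lra |].
    apply Rmult_lt_0_compat; [lra | apply pow_lt; lra].
Qed.

Ltac pose_pow_nonneg y hy :=
  pose proof (pow_le y 2 hy); pose proof (pow_le y 3 hy); pose proof (pow_le y 4 hy);
  pose proof (pow_le y 5 hy); pose proof (pow_le y 6 hy); pose proof (pow_le y 7 hy).

(* After [x = y + 1], each difference below is a rational function of [y] whose
   numerator has positive coefficients. *)
Lemma p_fun_step_lt x : 1 <= x ->
  p_fun x - p_fun (x + 2) < taylor_neg_ln_1m (1 / (x + 2) ^ 2).
Proof.
  intros hx. set (y := x - 1). assert (hy : 0 <= y) by (unfold y; lra).
  replace x with (y + 1) by (unfold y; ring).
  enough (0 < taylor_neg_ln_1m (1 / (y + 1 + 2) ^ 2) - (p_fun (y + 1) - p_fun (y + 1 + 2)))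
    by lra.
  replace (taylor_neg_ln_1m (1 / (y + 1 + 2) ^ 2) - (p_fun (y + 1) - p_fun (y + 1 + 2))) with
    ((668052 + 1711224 * y + 1858476 * y ^ 2 + 1080720 * y ^ 3 + 353196 * y ^ 4
      + 61560 * y ^ 5 + 4500 * y ^ 6) / (720 * (y + 1) ^ 6 * (y + 3) ^ 8))
    by (unfold taylor_neg_ln_1m, p_fun; field; lra).
  apply Rdiv_lt_0_compat; [pose_pow_nonneg y hy; lra|].
  repeat apply Rmult_lt_0_compat; try apply pow_lt; lra.
Qed.

Lemma q_fun_step_gt x : 1 <= x ->
  tail_bound_neg_ln_1m (1 / (x + 2) ^ 2) < q_fun x - q_fun (x + 2).
Proof.
  intros hx. set (y := x - 1). assert (hy : 0 <= y) by (unfold y; lra).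
  replace x with (y + 1) by (unfold y; ring).
  enough (0 < q_fun (y + 1) - q_fun (y + 1 + 2) - tail_bound_neg_ln_1m (1 / (y + 1 + 2) ^ 2))
    by lra.
  replace (q_fun (y + 1) - q_fun (y + 1 + 2) - tail_bound_neg_ln_1m (1 / (y + 1 + 2) ^ 2)) with
    ((8748 + 28920 * y + 44140 * y ^ 2 + 40840 * y ^ 3 + 23652 * y ^ 4 + 8200 * y ^ 5
      + 1540 * y ^ 6 + 120 * y ^ 7) / (60 * (y + 1) ^ 6 * (y + 3) ^ 6 * ((y + 2) * (y + 4))))
    by (unfold tail_bound_neg_ln_1m, q_fun, p_fun; field; repeat split; nra).
  apply Rdiv_lt_0_compat; [pose_pow_nonneg y hy; lra|].
  repeat apply Rmult_lt_0_compat; try apply pow_lt; lra.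
Qed.

Lemma p_fun_le_inv x : 1 <= x -> p_fun x <= / x.
Proof.
  intros hx. set (y := x - 1). assert (hy : 0 <= y) by (unfold y; lra).
  replace x with (y + 1) by (unfold y; ring).
  enough (0 <= / (y + 1) - p_fun (y + 1)) by lra.
  replace (/ (y + 1) - p_fun (y + 1)) with
    ((54 + 219 * y + 420 * y ^ 2 + 395 * y ^ 3 + 180 * y ^ 4 + 30 * y ^ 5)
     / (60 * (y + 1) ^ 6)) by (unfold p_fun; field; lra).
  apply Rdiv_le_0_compat; [pose_pow_nonneg y hy; lra|].
  apply Rmult_lt_0_compat, pow_lt; lra.
Qed.

Lemma q_fun_nonneg x : 1 <= x -> 0 <= q_fun x.
Proof.
  intros hx. set (y := x - 1). assert (hy : 0 <= y) by (unfold y; lra).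
  replace x with (y + 1) by (unfold y; ring).
  replace (q_fun (y + 1)) with
    ((16 + 81 * y + 180 * y ^ 2 + 205 * y ^ 3 + 120 * y ^ 4 + 30 * y ^ 5)
     / (60 * (y + 1) ^ 6)) by (unfold q_fun, p_fun; field; lra).
  apply Rdiv_le_0_compat; [pose_pow_nonneg y hy; lra|].
  apply Rmult_lt_0_compat, pow_lt; lra.
Qed.

(* Along [x0 + h, x0 + 2h, ...] the values stay below [d (x0 + h)] while the lower
   bound [-1/x] tends to [0]. *)
Lemma pos_of_shift_decreasing (d : R -> R) h x0 : 0 < h ->
  (forall x, 1 <= x -> d (x + h) < d x) ->
  (forall x, 1 <= x -> - / x <= d x) -> 1 <= x0 -> 0 < d x0.
Proof.
  intros hh Hdec Hlow hx0.
  set (delta := d x0 - d (x0 + h)).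
  assert (hdel : 0 < delta) by (pose proof (Hdec x0 hx0); unfold delta; lra).
  destruct (archimed_cor1 (delta * h)) as [N [HN HN0]]; [nra|].
  assert (Hmono : forall K, d (x0 + h + h * INR K) <= d (x0 + h)).
  { induction K as [|K IH].
    - simpl. rewrite Rmult_0_r, Rplus_0_r. lra.
    - rewrite S_INR.
      replace (x0 + h + h * (INR K + 1)) with ((x0 + h + h * INR K) + h) by ring.
      pose proof (pos_INR K). pose proof (Hdec (x0 + h + h * INR K) ltac:(nra)). lra. }
  assert (hN : 0 < INR N) by (apply lt_0_INR; lia).
  set (y := x0 + h + h * INR N).
  assert (Hy : 1 < delta * y).
  { apply (Rmult_lt_compat_r (INR N)) in HN; [|exact hN].
    rewrite Rinv_l in HN by lra. unfold y. nra. }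
  assert (/ y < delta).
  { apply (Rmult_lt_reg_r y); [nra|]. rewrite Rinv_l by nra. lra. }
  pose proof (Hmono N) as Hfar. fold y in Hfar.
  pose proof (Hlow y ltac:(unfold y; nra)). unfold delta in *. lra.
Qed.

Definition gamma_ratio (x : R) : R :=
  Gamma ((x + 1) / 2) * Gamma ((x + 3) / 2) / Gamma ((x + 2) / 2) ^ 2.

Lemma Gamma_half_succ x : 1 <= x -> Gamma ((x + 3) / 2) = (x + 1) / 2 * Gamma ((x + 1) / 2).
Proof.
  intros hx. rewrite <- Gamma_succ by lra. f_equal. field.
Qed.

Lemma gamma_ratio_ge1 x : 1 <= x -> 1 <= gamma_ratio x.
Proof.
  intros hx. unfold gamma_ratio.
  pose proof (Gamma_midpoint_sq_le ((x + 1) / 2) ((x + 3) / 2) ltac:(lra) ltac:(lra)) as H.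
  replace (((x + 1) / 2 + (x + 3) / 2) / 2) with ((x + 2) / 2) in H by field.
  pose proof (pow_lt _ 2 (Gamma_pos ((x + 2) / 2) ltac:(lra))).
  apply (Rmult_le_reg_r (Gamma ((x + 2) / 2) ^ 2)); [assumption|].
  unfold Rdiv. rewrite Rmult_assoc, Rinv_l, Rmult_1_r, Rmult_1_l by lra. exact H.
Qed.

Lemma gamma_ratio_mul_succ x : 1 <= x -> gamma_ratio x * gamma_ratio (x + 1) = (x + 2) / (x + 1).
Proof.
  intros hx. unfold gamma_ratio.
  replace ((x + 1 + 1) / 2) with ((x + 2) / 2) by field.
  replace ((x + 1 + 2) / 2) with ((x + 3) / 2) by field.
  replace ((x + 1 + 3) / 2) with (((x + 1) + 3) / 2) by field.
  rewrite (Gamma_half_succ (x + 1)), (Gamma_half_succ x) by lra.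
  replace ((x + 1 + 1) / 2) with ((x + 2) / 2) by field.
  pose proof (Gamma_pos ((x + 1) / 2) ltac:(lra)). pose proof (Gamma_pos ((x + 2) / 2) ltac:(lra)).
  field. repeat split; lra.
Qed.

Lemma gamma_ratio_add2 x : 1 <= x ->
  gamma_ratio (x + 2) = gamma_ratio x * (1 - 1 / (x + 2) ^ 2).
Proof.
  intros hx. unfold gamma_ratio.
  replace ((x + 2 + 1) / 2) with ((x + 3) / 2) by field.
  replace ((x + 2 + 3) / 2) with (((x + 2) + 3) / 2) by field.
  replace ((x + 2 + 2) / 2) with (((x + 1) + 3) / 2) by field.
  rewrite (Gamma_half_succ (x + 2)), (Gamma_half_succ (x + 1)) by lra.
  replace ((x + 2 + 1) / 2) with ((x + 3) / 2) by field.
  replace ((x + 1 + 1) / 2) with ((x + 2) / 2) by field.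
  rewrite (Gamma_half_succ x) by lra.
  pose proof (Gamma_pos ((x + 1) / 2) ltac:(lra)). pose proof (Gamma_pos ((x + 2) / 2) ltac:(lra)).
  field. repeat split; lra.
Qed.

Lemma inv_sq_add2_bounds x : 1 <= x -> 0 <= 1 / (x + 2) ^ 2 < 1.
Proof.
  intros hx. split.
  - apply Rdiv_le_0_compat; [lra | apply pow_lt; lra].
  - apply (Rmult_lt_reg_r ((x + 2) ^ 2)); [apply pow_lt; lra|].
    field_simplify; nra.
Qed.

Lemma ln_gamma_ratio_nonneg x : 1 <= x -> 0 <= ln (gamma_ratio x).
Proof. intros hx. rewrite <- ln_1. apply ln_le; [lra | apply gamma_ratio_ge1, hx]. Qed.

Lemma ln_gamma_ratio_le_inv x : 1 <= x -> ln (gamma_ratio x) <= / x.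
Proof.
  intros hx.
  pose proof (gamma_ratio_ge1 x hx). pose proof (gamma_ratio_ge1 (x + 1) ltac:(lra)).
  assert (E : ln (gamma_ratio x) = ln ((x + 2) / (x + 1)) - ln (gamma_ratio (x + 1))).
  { rewrite <- gamma_ratio_mul_succ, ln_mult by lra. ring. }
  pose proof (ln_gamma_ratio_nonneg (x + 1) ltac:(lra)).
  pose proof (exp_ineq1_le (ln ((x + 2) / (x + 1)))) as Hexp.
  rewrite exp_ln in Hexp by (apply Rdiv_lt_0_compat; lra).
  assert ((x + 2) / (x + 1) - 1 <= / x).
  { apply (Rmult_le_reg_r (x * (x + 1))); [nra|]. field_simplify; lra. }
  lra.
Qed.

Lemma ln_gamma_ratio_add2 x : 1 <= x ->
  ln (gamma_ratio (x + 2)) = ln (gamma_ratio x) + ln (1 - 1 / (x + 2) ^ 2).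
Proof.
  intros hx. pose proof (gamma_ratio_ge1 x hx). pose proof (inv_sq_add2_bounds x hx).
  rewrite gamma_ratio_add2, ln_mult by lra. reflexivity.
Qed.

Lemma ln_gamma_ratio_bounds x : 1 <= x ->
  p_fun x < ln (gamma_ratio x) < q_fun x.
Proof.
  intros hx. split.
  - enough (0 < ln (gamma_ratio x) - p_fun x) by lra.
    apply (pos_of_shift_decreasing (fun y => ln (gamma_ratio y) - p_fun y) 2); [lra | | | exact hx].
    + intros y hy. rewrite ln_gamma_ratio_add2 by exact hy.
      pose proof (p_fun_step_lt y hy). pose proof (taylor_le_neg_ln_1m _ (inv_sq_add2_bounds y hy)).
      lra.
    + intros y hy. pose proof (ln_gamma_ratio_nonneg y hy). pose proof (p_fun_le_inv y hy). lra.
  - enough (0 < q_fun x - ln (gamma_ratio x)) by lra.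
    apply (pos_of_shift_decreasing (fun y => q_fun y - ln (gamma_ratio y)) 2); [lra | | | exact hx].
    + intros y hy. rewrite ln_gamma_ratio_add2 by exact hy.
      pose proof (q_fun_step_gt y hy).
      pose proof (neg_ln_1m_le_tail_bound _ (inv_sq_add2_bounds y hy)). lra.
    + intros y hy. pose proof (ln_gamma_ratio_le_inv y hy). pose proof (q_fun_nonneg y hy). lra.
Qed.

Lemma Omega_ratio n : (1 <= n)%nat ->
  Omega n ^ 2 / (Omega (n - 1) * Omega (n + 1)) = gamma_ratio (INR n).
Proof.
  intros hn. unfold Omega, gamma_ratio.
  rewrite minus_INR, plus_INR by exact hn. simpl (INR 1).
  set (x := INR n). assert (hx : 1 <= x) by (apply (le_INR 1), hn).
  replace (x / 2 + 1) with ((x + 2) / 2) by field.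
  replace ((x - 1) / 2 + 1) with ((x + 1) / 2) by field.
  replace ((x + 1) / 2 + 1) with ((x + 3) / 2) by field.
  assert (Hpi : Rpower PI ((x - 1) / 2) * Rpower PI ((x + 1) / 2) = Rpower PI (x / 2) ^ 2).
  { rewrite <- Rpower_plus. simpl. rewrite Rmult_1_r, <- Rpower_plus. f_equal. field. }
  pose proof (Gamma_pos ((x + 1) / 2) ltac:(lra)). pose proof (Gamma_pos ((x + 2) / 2) ltac:(lra)).
  pose proof (Gamma_pos ((x + 3) / 2) ltac:(lra)).
  assert (0 < Rpower PI (x / 2)) by apply exp_pos.
  replace (Rpower PI ((x - 1) / 2) / Gamma ((x + 1) / 2)
           * (Rpower PI ((x + 1) / 2) / Gamma ((x + 3) / 2)))
    with (Rpower PI (x / 2) ^ 2 / (Gamma ((x + 1) / 2) * Gamma ((x + 3) / 2)))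
    by (rewrite <- Hpi; field; lra).
  field. repeat split; lra.
Qed.

Theorem theorem14 : forall n : nat, (1 <= n)%nat ->
  p_fun (INR n) < ln (Omega n ^ 2 / (Omega (n - 1) * Omega (n + 1))) /\
  ln (Omega n ^ 2 / (Omega (n - 1) * Omega (n + 1))) < q_fun (INR n).
Proof.
  intros n hn. rewrite Omega_ratio by exact hn.
  apply ln_gamma_ratio_bounds, (le_INR 1), hn.
Qed.
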